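(* Let $T$ be a rooted binary tree with black/white-coloured leaves and the induced node colouring and classification as described in the context, and suppose $T$ contains more than one maximal black subtree. Then no SPR operation on $T$ belonging to the class $(\mathrm{B},\mathrm{b},\mathrm{W},\ast)$, $(\mathrm{B},\mathrm{b},\mathrm{B},\ast)$ or $(\mathrm{B},\mathrm{b},\mathrm{G},\ast)$ produces a compatible tree.
   Context: All trees are rooted binary trees; every non-leaf node has exactly two children and every non-root node $n$ has a parent $\mathrm{pa}(n)$. A ''subtree'' always means a node together with all of its descendants. Colouring: each leaf is coloured black (B) or white (W); an internal node is black if both children are black, white if both children are white, and grey (G) otherwise. A subtree is black (resp. white) if all its nodes are black (resp. white); it is maximal if no strictly larger subtree containing it is black (resp. white). Classification: a black or white node is of type ''r'' if it is the root of a maximal subtree of its own colour, and of type ''b'' otherwise; all grey nodes are of type ''b'' by convention. A tree is compatible if it contains at most one maximal black subtree. SPR operation $(u,v)$ on $T$: $u$ is a non-root node, $v$ is a node with $v\notin\{u,\mathrm{pa}(u)\}$ and $v$ not a descendant of $u$; the subtree rooted at $u$ is pruned (the edge to $u$ is removed and $\mathrm{pa}(u)$ deleted, its other child taking its place), then regrafted by inserting a new node on the edge from $v$ to its parent (or as a new root above $v$ if $v$ is the root) whose two children are $v$ and $u$; colours of the resulting tree are recomputed by the same rule. The operation belongs to class $(x,y,z,w)$ where $x,z\in\{\mathrm{B},\mathrm{W},\mathrm{G}\}$ are the colours in $T$ of $u$ and $v$, and $y,w\in\{\mathrm{r},\mathrm{b}\}$ their classifications in $T$; $\ast$ denotes any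 value. *)

From mathcomp Require Import all_boot.
Set Implicit Arguments. Unset Strict Implicit. Unset Printing Implicit Defensive.

(* Rooted binary trees with coloured leaves: Lf true = black leaf,
   Lf false = white leaf.  Nodes are addressed by paths from the root:
   a seq bool, false = left child, true = right child. *)
Inductive tree := Lf (black : bool) | Nd (l r : tree).

Inductive colour := Black | White | Grey.

Fixpoint colour_of (t : tree) : colour :=
  match t with
  | Lf true => Black
  | Lf false => White
  | Nd l r =>
      match colour_of l, colour_of r with
      | Black, Black => Black
      | White, White => White
      | _, _ => Grey
      end
  end.

Fixpoint subt (t : tree) (p : seq bool) : option tree :=
  match p with
  | [::] => Some t
  | b :: p' => match t with
               | Lf _ => None
               | Nd l r => subt (if b then r else l) p'
               end
  end.

(* replace the subtree at address p by s (no-op if p is not a node) *)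
Fixpoint repl (t : tree) (p : seq bool) (s : tree) : tree :=
  match p with
  | [::] => s
  | b :: p' => match t with
               | Lf c => Lf c
               | Nd l r => if b then Nd l (repl r p' s) else Nd (repl l p' s) r
               end
  end.

Definition node_colour (t : tree) (p : seq bool) (c : colour) : Prop :=
  exists s, subt t p = Some s /\ colour_of s = c.

Definition all_col (c : colour) (s : tree) : Prop :=
  forall q s', subt s q = Some s' -> colour_of s' = c.

Definition is_max (c : colour) (t : tree) (p : seq bool) : Prop :=
  exists s, subt t p = Some s /\ all_col c s /\
    forall q s', prefix q p -> q != p -> subt t q = Some s' -> ~ all_col c s'.

(* classification: type "r" (black/white node rooting a maximal subtree of
   its own colour); type "b" is the negation (grey nodes are type "b") *)
Definition type_r (t : tree) (p : seq bool) : Prop :=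
  exists s, subt t p = Some s /\
    match colour_of s with
    | Black => is_max Black t p
    | White => is_max White t p
    | Grey => False
    end.

Definition type_b (t : tree) (p : seq bool) : Prop :=
  subt t p <> None /\ ~ type_r t p.

Definition compatible (t : tree) : Prop :=
  forall p q, is_max Black t p -> is_max Black t q -> p = q.

Definition more_than_one_max_black (t : tree) : Prop :=
  exists p q, p <> q /\ is_max Black t p /\ is_max Black t q.

Definition pa (u : seq bool) : seq bool := take (size u).-1 u.

Definition spr_valid (t : tree) (u v : seq bool) : Prop :=
  u <> [::] /\ subt t u <> None /\ subt t v <> None /\
  v <> u /\ v <> pa u /\ ~ prefix u v.

(* the SPR operation (u, v): prune the subtree at u (pa u is replaced by the
   sibling of u), then regraft it on the edge above (the image of) v, via a
   new node with children v and u (a new root if v is the root). *)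
Definition spr (t : tree) (u v : seq bool) : tree :=
  let pu := pa u in
  let b := last false u in
  let sib := rcons pu (~~ b) in
  let su := odflt t (subt t u) in
  let t1 := repl t pu (odflt t (subt t sib)) in
  let v' := if prefix sib v then pu ++ drop (size u) v else v in
  repl t1 v' (Nd (odflt t1 (subt t1 v')) su).

(* A black node u of type "b" is not the root of a maximal black subtree, so
   its parent already roots a black subtree.  Pruning u therefore replaces a
   black subtree by a black subtree (its sibling), which does not change the
   number of maximal black subtrees, and regrafting a subtree anywhere can
   only split, never merge, maximal black subtrees.  Hence the result still
   has at least two maximal black subtrees, whatever the colour of v. *)

From mathcomp Require Import all_boot.
Set Implicit Arguments. Unset Strict Implicit.

Fixpoint black (t : tree) : bool :=
  match t with Lf b => b | Nd l r => black l && black r end.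

Lemma blackP t : reflect (colour_of t = Black) (black t).
Proof.
elim: t => [[]|l IHl r IHr] /=; try by constructor.
case: IHl => [-> | Hl]; first by case: IHr => [-> | Hr]; constructor => //=;
  case: (colour_of r) Hr.
by constructor; case: (colour_of l) Hl => //; case: (colour_of r).
Qed.

Lemma subt_nil t : subt t [::] = Some t.
Proof. by case: t. Qed.

Lemma subt_cat t p q :
  subt t (p ++ q) = if subt t p is Some w then subt w q else None.
Proof. by elim: p t => [|b p IH] [c|l r] //=. Qed.

Lemma subt_rcons t p l r b :
  subt t p = Some (Nd l r) -> subt t (rcons p b) = Some (if b then r else l).
Proof. by rewrite -cats1 subt_cat => ->; case: b; rewrite /= subt_nil. Qed.

Lemma black_subt t p s : black t -> subt t p = Some s -> black s.
Proof.
elim: p t => [|b p IH] t Bt; first by rewrite subt_nil => -[<-].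
by case: t Bt => [c|l r] //= /andP[Bl Br]; case: b; apply: IH.
Qed.

Lemma all_col_black t : all_col Black t <-> black t.
Proof.
split => [Hall | Bt q s Hs]; first exact/blackP/(Hall [::] t (subt_nil t)).
exact/blackP/(black_subt Bt Hs).
Qed.

Lemma pa_rcons (s : seq bool) x : pa (rcons s x) = s.
Proof. by rewrite /pa size_rcons -cats1 take_size_cat. Qed.

Lemma prefix_rcons_neq (T : eqType) (q s : seq T) x :
  prefix q (rcons s x) -> q != rcons s x -> prefix q s.
Proof.
case/prefixP => r; case/lastP: r => [|r y]; first by rewrite cats0 => ->; rewrite eqxx.
by rewrite -rcons_cat => /rcons_inj [-> _] _; apply: prefix_prefix.
Qed.

Lemma is_max_black_nil t : is_max Black t [::] <-> black t.
Proof.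
rewrite /is_max subt_nil.
split => [[s [[<-] [/all_col_black]]] // | Bt].
exists t; split=> //; split=> [|q s' /prefixP[r]]; first exact/all_col_black.
by case: q => // _; rewrite eqxx.
Qed.

Lemma is_max_black_cons l r b p :
  is_max Black (Nd l r) (b :: p) <->
  ~~ black (Nd l r) /\ is_max Black (if b then r else l) p.
Proof.
split => [[s [Hs [Bs Hmax]]] | [NBt [s [Hs [Bs Hmax]]]]].
  split.
    apply/negP => Bt; apply: (Hmax [::] (Nd l r)) => //; exact/all_col_black.
  exists s; split=> //; split=> // q s' Hq Hne; apply: (Hmax (b :: q)).
  - by rewrite /= eqxx.
  - by rewrite eqseq_cons eqxx.
exists s; split=> //; split=> // -[|c q] s' Hq Hne /=.
  by case=> <- /all_col_black Bt; rewrite Bt in NBt.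
case/andP: Hq => /eqP Ec Hq; subst c; apply: Hmax => //.
by rewrite eqseq_cons eqxx in Hne.
Qed.

Fixpoint max_black_paths (t : tree) : seq (seq bool) :=
  if black t then [:: [::]] else
  if t is Nd l r then
    map (cons false) (max_black_paths l) ++ map (cons true) (max_black_paths r)
  else [::].

Lemma mem_map_cons (T : eqType) (x y : T) s (L : seq (seq T)) :
  (x :: s \in map (cons y) L) = (x == y) && (s \in L).
Proof. by apply/mapP/andP => [[s' Ls' [-> ->]] | [/eqP -> Ls]]; [split | exists s]. Qed.

Lemma mem_max_black_paths t p : is_max Black t p <-> p \in max_black_paths t.
Proof.
elim: t p => [c|l IHl r IHr] [|b p];
  try apply: iff_trans (is_max_black_nil _) _ => /=.
- by case: c.
- by split=> [[s []]|]; case: c.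
- by case: ifP => //= _; rewrite mem_cat; split=> // /orP[] /mapP[? _ ?].
apply: iff_trans (is_max_black_cons _ _ _ _) _ => /=.
case: (black l && black r) => /=; first by split=> [[]|]; rewrite inE.
rewrite mem_cat !mem_map_cons; case: b => /=.
  by split=> [[_ /IHr]|/IHr].
by rewrite orbF; split=> [[_ /IHl]|/IHl].
Qed.

Lemma max_black_paths_uniq t : uniq (max_black_paths t).
Proof.
elim: t => [[]|l IHl r IHr] //=; case: (black l && black r) => //.
have cons_inj b : injective (@cons bool b) by move=> ? ? [].
rewrite cat_uniq !map_inj_uniq ?IHl ?IHr ?andbT //=.
by apply/hasPn => _ /mapP[p _ ->]; rewrite mem_map_cons.
Qed.

Definition max_black_count (t : tree) : nat := size (max_black_paths t).

Lemma max_black_count_black t : black t -> max_black_count t = 1.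
Proof. by rewrite /max_black_count; case: t => [c|l r] /= ->. Qed.

Lemma max_black_count_Nd l r :
  max_black_count (Nd l r) =
  if black (Nd l r) then 1 else max_black_count l + max_black_count r.
Proof. by rewrite /max_black_count /=; case: ifP; rewrite ?size_cat ?size_map. Qed.

Lemma more_than_one_max_black_count t :
  more_than_one_max_black t -> 1 < max_black_count t.
Proof.
case=> p [q [Hpq [/mem_max_black_paths Hp /mem_max_black_paths Hq]]].
rewrite /max_black_count; move: Hp Hq Hpq.
by case: (max_black_paths t) => [|a [|b s]] //; rewrite !inE => /eqP-> /eqP->.
Qed.

Lemma max_black_count_not_compatible t : 1 < max_black_count t -> ~ compatible t.
Proof.
rewrite /max_black_count; have := max_black_paths_uniq t.
have mem_t p : p \in max_black_paths t -> is_max Black t p by move/mem_max_black_paths.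
case: (max_black_paths t) mem_t => [|a [|b s]] // mem_t.
rewrite /= inE negb_or => /andP[/andP[/eqP Nab _] _] _ Ht.
by apply: Nab; apply: Ht; apply: mem_t; rewrite !inE eqxx ?orbT.
Qed.

(* The count alone is not preserved by Nd: a subtree turning black can merge
   with a black sibling.  The blackness clause rules this out. *)
Definition max_black_le (t t' : tree) : bool :=
  (black t' ==> black t) && (max_black_count t <= max_black_count t').

Lemma max_black_le_refl t : max_black_le t t.
Proof. by rewrite /max_black_le implybb leqnn. Qed.

Lemma max_black_le_count t t' :
  max_black_le t t' -> max_black_count t <= max_black_count t'.
Proof. by case/andP. Qed.

Lemma max_black_le_black t t' : black t -> black t' -> max_black_le t t'.
Proof.
by move=> Bt Bt'; rewrite /max_black_le Bt implybT !max_black_count_black.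
Qed.

Lemma max_black_count_Nd_le l r :
  max_black_count (Nd l r) <= max_black_count l + max_black_count r.
Proof.
rewrite max_black_count_Nd; case: ifP => //= /andP[Bl _].
by rewrite max_black_count_black.
Qed.

Lemma max_black_le_Nd l r l' r' :
  max_black_le l l' -> max_black_le r r' -> max_black_le (Nd l r) (Nd l' r').
Proof.
case/andP => Hl cl /andP[Hr cr].
have [Bt' | NB'] := boolP (black (Nd l' r')).
  move: (Bt') => /= /andP[Bl' Br'].
  by apply: max_black_le_black; rewrite //= (implyP Hl Bl') (implyP Hr Br').
rewrite /max_black_le [max_black_count (Nd l' r')]max_black_count_Nd (negbTE NB').
exact: leq_trans (max_black_count_Nd_le l r) (leq_add cl cr).
Qed.

Lemma max_black_le_repl t p x :
  (forall s, subt t p = Some s -> max_black_le s x) -> max_black_le t (repl t p x).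
Proof.
elim: p t => [|b p IH] t Hx; first by case: t Hx => [c|l r] /(_ _ erefl).
case: t Hx => [c|l r] Hx /=; first exact: max_black_le_refl.
by case: b Hx => Hx; apply: max_black_le_Nd; rewrite ?IH ?max_black_le_refl.
Qed.

Lemma max_black_le_Nd_l s x : max_black_le s (Nd s x).
Proof.
rewrite /max_black_le max_black_count_Nd /=; apply/andP; split.
  by apply/implyP => /andP[].
case: ifP => [/andP[Bs _] | _]; last exact: leq_addr.
by rewrite max_black_count_black.
Qed.

Lemma max_black_le_graft t p x :
  max_black_le t (repl t p (Nd (odflt t (subt t p)) x)).
Proof. by apply: max_black_le_repl => s ->; apply: max_black_le_Nd_l. Qed.

Lemma max_black_le_prune t p l r b :
  subt t p = Some (Nd l r) -> black (Nd l r) ->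
  max_black_le t (repl t p (if b then r else l)).
Proof.
move=> Hp Bp; apply: max_black_le_repl => s; rewrite Hp => -[<-].
move: (Bp) => /= /andP[Bl Br]; by apply: max_black_le_black; case: b.
Qed.

Lemma black_parent_of_type_b t p x :
  node_colour t (rcons p x) Black -> type_b t (rcons p x) ->
  exists l r, subt t p = Some (Nd l r) /\ black (Nd l r).
Proof.
case=> s [Hs /blackP Bs] [_ Nr].
move: (Hs); rewrite -cats1 subt_cat; case Hp: (subt t p) => [[c|l r]|] //= _.
exists l, r; split=> //; apply/negP => NBp; apply: Nr.
exists s; split=> //; rewrite (blackP _ Bs); exists s; split=> //.
split=> [|q s' Hq Hne Hs' /all_col_black Bs']; first exact/all_col_black.
have /prefixP [q' Eq] := prefix_rcons_neq Hq Hne.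
by move: Hp; rewrite Eq subt_cat Hs' => /(black_subt Bs') /NBp.
Qed.

Theorem lemma2 (t : tree) (u v : seq bool) :
  more_than_one_max_black t ->
  spr_valid t u v ->
  (* class (B, b, z, * ) with z in {W, B, G} *)
  node_colour t u Black -> type_b t u ->
  (node_colour t v White \/ node_colour t v Black \/ node_colour t v Grey) ->
  ~ compatible (spr t u v).
Proof.
move=> /more_than_one_max_black_count Ht [Nu _] Bu Hu _.
case/lastP: u Nu Bu Hu => [//|p x] _ Bu Hu.
have [l [r [Hp Bp]]] := black_parent_of_type_b Bu Hu.
rewrite /spr pa_rcons last_rcons (subt_rcons _ Hp).
set t1 := repl t p _; set v' := if _ then _ else _; set su := odflt t _.
have /max_black_le_count le_t_t1 := max_black_le_prune (~~ x) Hp Bp.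
have /max_black_le_count le_t1_spr := max_black_le_graft t1 v' su.
exact/max_black_count_not_compatible/(leq_trans Ht)/(leq_trans le_t_t1).
Qed.
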